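(* For every integer $n\ge 0$, \[ \sum_{k=0}^{n}(-4)^k\frac{\binom{n}{k}}{\binom{1+2k}{k}}H_{1+2k} =\frac{2H_{1+2n}-H_n}{2(4n^2-1)}-\frac{4n^3+8n^2+7n-2}{(4n^2-1)^2}. \]
   Context: For an integer $m\ge 0$, $H_m$ denotes the $m$-th harmonic number: $H_0=0$ and $H_m=\sum_{j=1}^m \frac1j$ for $m\ge1$. $\binom{n}{k}$ is the usual binomial coefficient. *)

From HB Require Import structures.
From mathcomp Require Import all_boot all_order all_algebra.
Set Implicit Arguments. Unset Strict Implicit. Unset Printing Implicit Defensive.
Import Order.TTheory GRing.Theory Num.Theory.
Local Open Scope ring_scope.

Definition harmonic (m : nat) : rat := \sum_(1 <= j < m.+1) (j%:R)^-1.

From HB Require Import structures.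
From mathcomp Require Import all_boot all_order all_algebra.
From mathcomp Require Import ring lra zify.
Import Order.TTheory GRing.Theory Num.Theory.
Local Open Scope ring_scope.

(* Let t(n,k) be the summand without its harmonic factor.  Zeilberger's
   algorithm yields a certificate [cert] for the recurrence
   (2n+3) sum_k t(n+1,k) = (2n-1) sum_k t(n,k), whence sum_k t(n,k) = -1/(4n^2-1).
   Multiplied by H_(2k+1), the same certificate telescopes up to the increments
   H_(2k+3) - H_(2k+1) = 1/(2k+2) + 1/(2k+3), which contribute a multiple of
   sum_k t(n+1,k) (4k+1); a Gosper-type telescoping sum in k expresses this
   through sum_k t(n+1,k).  So both sides satisfy the same inhomogeneous
   first-order recurrence in n, and they agree at n = 0. *)

Ltac natr_pos x := have := ler0n rat x; lra.

Lemma bin_odd_neq0 k : ('C(1 + 2 * k, k)%:R : rat) != 0.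
Proof. by rewrite pnatr_eq0 -lt0n bin_gt0; lia. Qed.

Lemma bin_oddS k :
  (k.+2 * 'C(1 + 2 * k.+1, k.+1) = 2 * (2 * k + 3) * 'C(1 + 2 * k, k))%N.
Proof.
have diag := mul_bin_diag (2 * k + 3) k.
have down := mul_bin_down (2 * k + 2) k.
rewrite (_ : (2 * k + 3).-1 = 2 * k + 2)%N in diag; last by lia.
rewrite (_ : (2 * k + 2).-1 = 1 + 2 * k)%N in down; last by lia.
rewrite (_ : 2 * k + 2 - k = k.+2)%N in down; last by lia.
rewrite (_ : 1 + 2 * k.+1 = 2 * k + 3)%N; last by lia.
apply/eqP; rewrite -(eqn_pmul2l (ltn0Sn k)); apply/eqP.
by rewrite mulnA (mulnC k.+1) -mulnA -diag mulnCA -down; lia.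
Qed.

Definition term (n k : nat) : rat :=
  (-4 : rat) ^+ k * ('C(n, k)%:R / 'C(1 + 2 * k, k)%:R).

Lemma term_n0 n : term n 0 = 1.
Proof. by rewrite /term !bin0 expr0 mul1r divr1. Qed.

Lemma term_eq0 n k : (n < k)%N -> term n k = 0.
Proof. by move=> lt_nk; rewrite /term bin_small // mul0r mulr0. Qed.

Lemma termS n k : term n k.+1 =
  term n k * (-2) * (n%:R - k%:R) * (k%:R + 2) / ((k%:R + 1) * (2 * k%:R + 3)).
Proof.
have binS : ('C(1 + 2 * k.+1, k.+1)%:R : rat)
    = 2 * (2 * k%:R + 3) * 'C(1 + 2 * k, k)%:R / (k%:R + 2).
  have := congr1 (fun x : nat => (x%:R : rat)) (bin_oddS k).
  rewrite -addn2 !natrM !natrD => eq_k.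
  apply: (mulfI (_ : (k%:R + 2 : rat) != 0)); first by natr_pos k.
  by rewrite eq_k; field; natr_pos k.
have binnS : ('C(n, k.+1)%:R : rat) = (n%:R - k%:R) * 'C(n, k)%:R / (k%:R + 1).
  have [le_kn | lt_nk] := leqP k n; last by rewrite !bin_small ?mulr0 ?mul0r //; lia.
  have := congr1 (fun x : nat => (x%:R : rat)) (mul_bin_left n k).
  rewrite !natrM natrB // -natr1 => eq_k.
  apply: (mulfI (_ : (k%:R + 1 : rat) != 0)); first by natr_pos k.
  by rewrite eq_k; field; natr_pos k.
rewrite /term binS binnS exprS; field.
by rewrite bin_odd_neq0 /=; apply/and3P; split; natr_pos k.
Qed.

Lemma term_Sn n k : term n k = term n.+1 k * (n%:R + 1 - k%:R) / (n%:R + 1).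
Proof.
have [le_kn | lt_nk] := leqP k n.+1; last by rewrite !term_eq0 ?mul0r //; lia.
have /= eq_n := congr1 (fun x : nat => (x%:R : rat)) (mul_bin_down n.+1 k).
rewrite !natrM natrB // -natr1 in eq_n.
rewrite /term; have -> : ('C(n, k)%:R : rat) = (n%:R + 1 - k%:R) * 'C(n.+1, k)%:R / (n%:R + 1).
  apply: (mulfI (_ : (n%:R + 1 : rat) != 0)); first by natr_pos n.
  by rewrite eq_n; field; natr_pos n.
by field; rewrite bin_odd_neq0 /=; natr_pos n.
Qed.

Lemma big_term_ext n (f : nat -> rat) :
  \sum_(0 <= k < n.+2) term n k * f k = \sum_(0 <= k < n.+1) term n k * f k.
Proof. by rewrite big_nat_recr //= term_eq0 // mul0r addr0. Qed.

(* Zeilberger's certificate for the recurrence in [n]. *)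
Definition cert (n k : nat) : rat :=
  - (k%:R * (2 * k%:R + 1)) / (n%:R + 1) * term n.+1 k.

Lemma cert0 n : cert n 0 = 0.
Proof. by rewrite /cert !mul0r. Qed.

Lemma cert_out n : cert n n.+2 = 0.
Proof. by rewrite /cert term_eq0 ?mulr0. Qed.

Lemma cert_telescope n k :
  (2 * n%:R + 3) * term n.+1 k - (2 * n%:R - 1) * term n k = cert n k.+1 - cert n k.
Proof.
rewrite /cert (term_Sn n k) (termS n.+1 k) -!natr1.
by field; apply/and3P; split; [natr_pos n | natr_pos k | natr_pos k].
Qed.

Definition sum_term (n : nat) : rat := \sum_(0 <= k < n.+1) term n k.

Lemma sum_term_ext n : sum_term n = \sum_(0 <= k < n.+2) term n k.
Proof. by rewrite /sum_term [RHS]big_nat_recr //= term_eq0 // addr0. Qed.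

Lemma sum_termS n : (2 * n%:R + 3) * sum_term n.+1 = (2 * n%:R - 1) * sum_term n.
Proof.
apply/eqP; rewrite -subr_eq0 (sum_term_ext n) /sum_term !mulr_sumr -sumrB.
rewrite (eq_bigr _ (fun k _ => cert_telescope n k)).
by rewrite telescope_sumr // cert_out cert0 subrr.
Qed.

Lemma four_sqr_sub1_neq0 m : (4 * m%:R ^+ 2 - 1 : rat) != 0.
Proof. by rewrite -natrX -natrM subr_eq0 pnatr_eq1; apply/eqP; lia. Qed.

Lemma three_sub_double_neq0 m : (3 - 2 * m%:R : rat) != 0.
Proof. by rewrite -natrM subr_eq0 eqr_nat; apply/eqP; lia. Qed.

Lemma sum_termE n : sum_term n = - 1 / (4 * n%:R ^+ 2 - 1).
Proof.
elim: n => [|n IHn]; first by rewrite /sum_term big_nat1 term_n0; field.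
have := sum_termS n; rewrite IHn => rec.
apply: (mulfI (_ : (2 * n%:R + 3 : rat) != 0)); first by natr_pos n.
by rewrite rec -natr1; field; rewrite nat1r !four_sqr_sub1_neq0.
Qed.

Definition sum_term_lin (m : nat) : rat :=
  \sum_(0 <= k < m.+1) term m k * (4 * k%:R + 1).

Lemma sum_term_linE m :
  sum_term_lin m = - (3 + 14 * m%:R) / ((3 - 2 * m%:R) * (4 * m%:R ^+ 2 - 1)).
Proof.
pose Q k := k%:R * (2 * k%:R + 1) * term m k.
have Q_telescope k :
    term m k * (k%:R * (3 - 2 * m%:R) - 4 * m%:R) = Q k.+1 - Q k.
  by rewrite /Q termS -natr1; field; apply/andP; split; natr_pos k.
have sum_annihilated :
    \sum_(0 <= k < m.+1) term m k * (k%:R * (3 - 2 * m%:R) - 4 * m%:R) = 0.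
  rewrite (eq_bigr _ (fun k _ => Q_telescope k)) telescope_sumr //.
  by rewrite /Q term_eq0 // term_n0 !mulr0 mul0r subrr.
have lin_comb : sum_term_lin m * (3 - 2 * m%:R) = sum_term m * (3 + 14 * m%:R).
  rewrite /sum_term_lin /sum_term !mulr_suml.
  rewrite (eq_bigr (fun k => 4 * (term m k * (k%:R * (3 - 2 * m%:R) - 4 * m%:R))
                             + term m k * (3 + 14 * m%:R))); last by move=> k _; ring.
  by rewrite big_split /= -mulr_sumr sum_annihilated mulr0 add0r.
apply: (mulIf (three_sub_double_neq0 m)); rewrite lin_comb sum_termE.
by field; rewrite three_sub_double_neq0 four_sqr_sub1_neq0.
Qed.

Lemma sum_term_lin_shift m :
  \sum_(0 <= k < m.+1) term m k.+1 * (4 * k%:R + 5) = sum_term_lin m - 1.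
Proof.
rewrite /sum_term_lin -(big_term_ext m (fun k => 4 * k%:R + 1)).
rewrite [in RHS]big_nat_recl // term_n0 mulr0 add0r mul1r addrC addKr.
by apply: eq_bigr => k _; rewrite -natr1; congr (_ * _); ring.
Qed.

Lemma harmonicS m : harmonic m.+1 = harmonic m + m.+1%:R^-1.
Proof. by rewrite /harmonic big_nat_recr. Qed.

Lemma harmonic_oddS k : harmonic (1 + 2 * k.+1)
  = harmonic (1 + 2 * k) + (2 * k%:R + 2)^-1 + (2 * k%:R + 3)^-1.
Proof.
have -> : (1 + 2 * k.+1 = (2 * k + 2).+1)%N by lia.
rewrite harmonicS; have -> : (2 * k + 2 = (1 + 2 * k).+1)%N by lia.
rewrite harmonicS; have -> : ((1 + 2 * k).+2 = 2 * k + 3)%N by lia.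
have -> : ((1 + 2 * k).+1 = 2 * k + 2)%N by lia.
have cast j : ((2 * k + j)%:R : rat) = 2 * k%:R + j%:R by rewrite natrD natrM.
by rewrite (cast 2) (cast 3).
Qed.

Definition sum_term_harmonic (n : nat) : rat :=
  \sum_(0 <= k < n.+1) term n k * harmonic (1 + 2 * k).

Lemma cert_harmonic_telescope n k :
  (2 * n%:R + 3) * (term n.+1 k * harmonic (1 + 2 * k))
    - (2 * n%:R - 1) * (term n k * harmonic (1 + 2 * k))
  = (cert n k.+1 * harmonic (1 + 2 * k.+1) - cert n k * harmonic (1 + 2 * k))
    + term n.+1 k.+1 * (4 * k%:R + 5) / (2 * (n%:R + 1)).
Proof.
rewrite harmonic_oddS /cert (term_Sn n k) (termS n.+1 k) -!natr1.
by field; apply/and4P; split; natr_pos k || natr_pos n.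
Qed.

Lemma sum_term_harmonicS n :
  (2 * n%:R + 3) * sum_term_harmonic n.+1 - (2 * n%:R - 1) * sum_term_harmonic n
  = (sum_term_lin n.+1 - 1) / (2 * (n%:R + 1)).
Proof.
rewrite /sum_term_harmonic -(big_term_ext n (fun k => harmonic (1 + 2 * k))).
rewrite !mulr_sumr -sumrB (eq_bigr _ (fun k _ => cert_harmonic_telescope n k)).
rewrite big_split /= telescope_sumr // cert_out cert0 !mul0r subr0 add0r.
by rewrite -mulr_suml sum_term_lin_shift.
Qed.

Definition closed_form (n : nat) : rat :=
  (2 * harmonic (1 + 2 * n) - harmonic n) / (2 * (4 * n%:R ^+ 2 - 1))
    - (4 * n%:R ^+ 3 + 8 * n%:R ^+ 2 + 7 * n%:R - 2) / (4 * n%:R ^+ 2 - 1) ^+ 2.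

Lemma closed_formS n :
  (2 * n%:R + 3) * closed_form n.+1 - (2 * n%:R - 1) * closed_form n
  = (sum_term_lin n.+1 - 1) / (2 * (n%:R + 1)).
Proof.
rewrite /closed_form sum_term_linE harmonic_oddS harmonicS -!natr1.
field; rewrite natr1 three_sub_double_neq0 !four_sqr_sub1_neq0 /=.
by apply/and3P; split; natr_pos n.
Qed.

Theorem theorem4 (n : nat) :
  \sum_(0 <= k < n.+1)
     (-4 : rat) ^+ k * ('C(n, k)%:R / 'C(1 + 2 * k, k)%:R) * harmonic (1 + 2 * k)
  = (2 * harmonic (1 + 2 * n) - harmonic n) / (2 * (4 * n%:R ^+ 2 - 1))
    - (4 * n%:R ^+ 3 + 8 * n%:R ^+ 2 + 7 * n%:R - 2) / (4 * n%:R ^+ 2 - 1) ^+ 2.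
Proof.
rewrite -/(closed_form n) -/(sum_term_harmonic n).
elim: n => [|n IHn].
  by rewrite /sum_term_harmonic /closed_form big_nat1 term_n0 /harmonic !big_nat1 big_geq.
apply: (mulfI (_ : (2 * n%:R + 3 : rat) != 0)); first by natr_pos n.
apply: (addIr (- ((2 * n%:R - 1) * closed_form n))).
by rewrite closed_formS -IHn sum_term_harmonicS.
Qed.
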